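(* Let $X,Y$ be uniform spaces and $f\colon X\to Y$ a function generating the uniform structure on $Y$. Then $f$ is a uniform covering map if and only if (a) $f$ has the chain lifting property and (b) $f$ has the uniqueness of chain lifts property.
   Context: Notation: entourages are symmetric and contain the diagonal; $B(x,E)=\{y:(x,y)\in E\}$; $f(E)=\{(f(x),f(y)):(x,y)\in E\}$. A surjection $f\colon X\to Y$ generates the uniform structure on $Y$ if $\{f(E)\}$ ($E$ entourage of $X$) is a base of the uniform structure of $Y$. The Rips complex $R(X,E)$ is the simplicial complex with vertex set $X$ whose simplices are finite $F\subset X$ with $F\times F\subset E$; $f_E\colon R(X,E)\to R(Y,f(E))$ is the induced simplicial map. $f$ is a uniform covering map if it generates the uniform structure on $Y$ and the entourages $E$ of $X$ for which $f_E$ is a topological covering map form a base of $X$. An $E$-chain is a sequence $x_0,\dots,x_n$ with $(x_i,x_{i+1})\in E$. $f$ has the chain lifting property if for every entourage $E$ of $X$ there is an entourage $F$ of $X$ such that every $f(F)$-chain in $Y$ starting at $f(x_0)$ lifts (via $f$) to an $E$-chain in $X$ starting at $x_0$, for every $x_0\in X$. $f$ has the uniqueness of chain lifts property if for every entourage $E$ there is an entourage $F$ such that any two $F$-chains with common origin and identical images under $f$ are equal. *)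

From Stdlib Require Import Reals List Classical ClassicalEpsilon.
Open Scope R_scope.
Set Implicit Arguments.

(* Convention of the paper: entourages are symmetric and contain the diagonal. *)
Definition reflexive_rel {X} (E : X -> X -> Prop) := forall x, E x x.
Definition symmetric_rel {X} (E : X -> X -> Prop) := forall x y, E x y -> E y x.

Definition is_uniformity {X : Type} (U : (X -> X -> Prop) -> Prop) : Prop :=
  (forall E, U E -> reflexive_rel E) /\
  (forall E, U E -> symmetric_rel E) /\
  (exists E, U E) /\
  (forall E1 E2, U E1 -> U E2 -> U (fun x y => E1 x y /\ E2 x y)) /\
  (forall E F, U E -> (forall x y, E x y -> F x y) ->
     reflexive_rel F -> symmetric_rel F -> U F) /\
  (forall E, U E -> exists F, U F /\ forall x y z, F x y -> F y z -> E x z).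

Definition img_rel {X Y} (f : X -> Y) (E : X -> X -> Prop) : Y -> Y -> Prop :=
  fun y1 y2 => exists x1 x2, E x1 x2 /\ f x1 = y1 /\ f x2 = y2.

Definition surjective {X Y} (f : X -> Y) := forall y, exists x, f x = y.

Definition generates_uniformity {X Y} (UX : (X -> X -> Prop) -> Prop)
    (UY : (Y -> Y -> Prop) -> Prop) (f : X -> Y) : Prop :=
  surjective f /\
  (forall E, UX E -> UY (img_rel f E)) /\
  (forall D, UY D -> exists E, UX E /\ forall y1 y2, img_rel f E y1 y2 -> D y1 y2).

Definition lsum {X} (l : list X) (t : X -> R) : R := fold_right Rplus 0 (map t l).

(* a finite F (given as a duplicate-free list) with F x F ⊆ E *)
Definition rips_simplex {X} (E : X -> X -> Prop) (l : list X) : Prop :=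
  NoDup l /\ forall x y, In x l -> In y l -> E x y.

(* points of |R(X,E)|: barycentric coordinate functions supported on a simplex *)
Definition rips_point {X} (E : X -> X -> Prop) (t : X -> R) : Prop :=
  (forall x, 0 <= t x) /\
  exists l, rips_simplex E l /\ (forall x, t x <> 0 -> In x l) /\ lsum l t = 1.

Definition in_closed_simplex {X} (E : X -> X -> Prop) (l : list X) (t : X -> R) :=
  rips_point E t /\ forall x, t x <> 0 -> In x l.

(* Weak topology: U is open iff its trace on every closed simplex is open
   in the Euclidean topology of that simplex. *)
Definition rips_open {X} (E : X -> X -> Prop) (U : (X -> R) -> Prop) : Prop :=
  forall l, rips_simplex E l ->
  forall t, in_closed_simplex E l t -> U t ->
  exists eps, 0 < eps /\
    forall s, in_closed_simplex E l s ->
      (forall x, In x l -> Rabs (s x - t x) < eps) -> U s.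

(* the induced simplicial map f_E on realizations:
   (f_E t)(y) = sum of t x over x with f x = y *)
Definition supp_list {X} (t : X -> R) : list X :=
  epsilon (inhabits nil) (fun l => NoDup l /\ forall x, t x <> 0 -> In x l).

Definition push {X Y} (f : X -> Y) (t : X -> R) : Y -> R :=
  fun y => lsum (supp_list t)
             (fun x => if excluded_middle_informative (f x = y) then t x else 0).

(* Spaces are given as a domain predicate on an ambient type together with a
   predicate of open sets (opens being taken relative to the domain). *)
Definition covering_map {T S} (DA : T -> Prop) (OA : (T -> Prop) -> Prop)
    (DB : S -> Prop) (OB : (S -> Prop) -> Prop) (p : T -> S) : Prop :=
  (forall a, DA a -> DB (p a)) /\
  (forall b, DB b -> exists a, DA a /\ p a = b) /\
  (forall V, OB V -> OA (fun a => DA a /\ V (p a))) /\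
  (forall b, DB b -> exists V, OB V /\ V b /\
     exists Sh : (T -> Prop) -> Prop,
       (forall W, Sh W -> OA W /\ forall a, W a -> DA a /\ V (p a)) /\
       (forall a, DA a -> V (p a) -> exists W, Sh W /\ W a) /\
       (forall W1 W2, Sh W1 -> Sh W2 -> (exists a, W1 a /\ W2 a) ->
          forall a, W1 a <-> W2 a) /\
       (forall W, Sh W ->
          (* p|W is a homeomorphism onto V *)
          (forall a1 a2, W a1 -> W a2 -> p a1 = p a2 -> a1 = a2) /\
          (forall b', DB b' -> V b' -> exists a, W a /\ p a = b') /\
          (forall O, OA O -> (forall a, O a -> W a) ->
             OB (fun b' => exists a, O a /\ p a = b')))).

Definition rips_covering {X Y} (f : X -> Y) (E : X -> X -> Prop) : Prop :=
  covering_map (rips_point E) (rips_open E)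
               (rips_point (img_rel f E)) (rips_open (img_rel f E)) (push f).

Definition uniform_covering_map {X Y} (UX : (X -> X -> Prop) -> Prop)
    (UY : (Y -> Y -> Prop) -> Prop) (f : X -> Y) : Prop :=
  generates_uniformity UX UY f /\
  forall D, UX D -> exists E, UX E /\ (forall x y, E x y -> D x y) /\
    rips_covering f E.

(* chain_from E x0 [x1;...;xn] : x0,x1,...,xn is an E-chain *)
Fixpoint chain_from {X} (E : X -> X -> Prop) (x : X) (l : list X) : Prop :=
  match l with
  | nil => True
  | y :: l' => E x y /\ chain_from E y l'
  end.

Definition chain_lifting {X Y} (UX : (X -> X -> Prop) -> Prop) (f : X -> Y) : Prop :=
  forall E, UX E -> exists F, UX F /\
    forall (x0 : X) (ys : list Y), chain_from (img_rel f F) (f x0) ys ->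
      exists xs, chain_from E x0 xs /\ map f xs = ys.

Definition unique_chain_lifts {X Y} (UX : (X -> X -> Prop) -> Prop) (f : X -> Y) : Prop :=
  forall E, UX E -> exists F, UX F /\
    forall (x0 : X) (xs1 xs2 : list X),
      chain_from F x0 xs1 -> chain_from F x0 xs2 -> map f xs1 = map f xs2 ->
      xs1 = xs2.

(* Call an entourage E
   "locally lifting" for f when
     (i)  every f(E)-step starting at f x lifts to an E-step starting at x, and
     (ii) f is injective on the second E-neighbourhood of each point, in the
          form  E x a, E a b, E x c, f b = f c  ->  b = c.
   - (=>) If f_E is a covering, evaluating its evenly covered neighbourhoods
     at a vertex x and at points close to x on the edges [x,a] shows that
     single f(E)-steps lift and that f is injective on B(x,E); induction on
     the length of chains gives both chain properties.
   - (<=) If E is locally lifting then f_E is a covering: over the open star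
     of a vertex y of R(Y,f(E)) the sheets are the open stars of the vertices
     x in f^-1(y), and on each of them f_E is a homeomorphism whose inverse
     lifts a point u to z |-> u (f z) on B(x,E).  Chain lifting and
     uniqueness of chain lifts provide locally lifting entourages inside any
     given entourage. *)

From Stdlib Require Import Reals List Classical ClassicalEpsilon Lra Permutation
  FunctionalExtensionality.
Open Scope R_scope.

Notation dec := excluded_middle_informative.

Lemma lsum_cons {X} (a : X) l t : lsum (a :: l) t = t a + lsum l t.
Proof. reflexivity. Qed.

Lemma lsum_nil {X} (t : X -> R) : lsum nil t = 0.
Proof. reflexivity. Qed.

Lemma lsum_ext {X} (l : list X) g h :
  (forall x, In x l -> g x = h x) -> lsum l g = lsum l h.
Proof.
  induction l as [|a l IH]; intros H; [reflexivity|].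
  rewrite !lsum_cons, H by (left; auto). rewrite IH; auto.
  intros; apply H; right; auto.
Qed.

Lemma lsum_plus {X} (l : list X) g h :
  lsum l (fun x => g x + h x) = lsum l g + lsum l h.
Proof. induction l; rewrite ?lsum_cons, ?lsum_nil; [lra|]. rewrite IHl. lra. Qed.

Lemma lsum_minus {X} (l : list X) g h :
  lsum l g - lsum l h = lsum l (fun x => g x - h x).
Proof. induction l; rewrite ?lsum_cons, ?lsum_nil; [lra|]. rewrite <- IHl. lra. Qed.

Lemma lsum_map {X Y} (f : X -> Y) l u : lsum (map f l) u = lsum l (fun z => u (f z)).
Proof. unfold lsum. rewrite map_map. reflexivity. Qed.

Lemma lsum_zero {X} (l : list X) g : (forall x, In x l -> g x = 0) -> lsum l g = 0.
Proof.
  induction l as [|a l IH]; intros H; [reflexivity|].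
  rewrite lsum_cons, H by (simpl; auto). rewrite IH; [lra|].
  intros; apply H; right; auto.
Qed.

Lemma lsum_nonneg {X} (l : list X) g : (forall x, In x l -> 0 <= g x) -> 0 <= lsum l g.
Proof.
  induction l as [|a l IH]; intros H; rewrite ?lsum_cons, ?lsum_nil; [lra|].
  assert (0 <= g a) by (apply H; left; auto).
  assert (0 <= lsum l g) by (apply IH; intros; apply H; right; auto). lra.
Qed.

Lemma lsum_abs_bound {X} (l : list X) g e : (forall x, In x l -> Rabs (g x) <= e) ->
  Rabs (lsum l g) <= INR (length l) * e.
Proof.
  induction l as [|a l IH]; intros H; rewrite ?lsum_cons, ?lsum_nil.
  - simpl. rewrite Rabs_R0. lra.
  - simpl length. rewrite S_INR.
    assert (Rabs (g a) <= e) by (apply H; left; auto).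
    assert (Rabs (lsum l g) <= INR (length l) * e) by (apply IH; intros; apply H; right; auto).
    pose proof (Rabs_triang (g a) (lsum l g)). lra.
Qed.

Lemma lsum_nonzero {X} (l : list X) g : lsum l g <> 0 -> exists x, In x l /\ g x <> 0.
Proof.
  induction l as [|a l IH]; intros H; rewrite ?lsum_cons, ?lsum_nil in H; [lra|].
  destruct (Req_dec (g a) 0) as [E|E].
  - destruct IH as [x [Hx Hg]]; [lra|]. exists x; split; [right|]; auto.
  - exists a; split; [left|]; auto.
Qed.

Lemma lsum_delta {X} (l : list X) g a : NoDup l -> In a l ->
  (forall y, In y l -> g y <> 0 -> y = a) -> lsum l g = g a.
Proof.
  induction l as [|b l IH]; intros Hnd Ha H; [destruct Ha|].
  inversion Hnd; subst. rewrite lsum_cons.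
  destruct Ha as [<-|Ha].
  - rewrite lsum_zero; [lra|]. intros y Hy.
    destruct (Req_dec (g y) 0); auto. exfalso.
    assert (y = b) by (apply H; [right|]; auto). subst; auto.
  - assert (b <> a) by (intro; subst; auto).
    assert (g b = 0) by (destruct (Req_dec (g b) 0); auto; exfalso; apply H0; apply H; [left|]; auto).
    rewrite IH; auto; [lra|]. intros; apply H; [right|]; auto.
Qed.

Lemma lsum_perm {X} (l1 l2 : list X) g : Permutation l1 l2 -> lsum l1 g = lsum l2 g.
Proof.
  induction 1; rewrite ?lsum_cons; auto.
  - rewrite IHPermutation; auto.
  - lra.
  - congruence.
Qed.

Lemma lsum_filter {X} (l : list X) g :
  lsum l g = lsum (filter (fun x => if dec (g x = 0) then false else true) l) g.
Proof.
  induction l as [|a l IH]; [reflexivity|]. simpl filter.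
  destruct (dec (g a = 0)) as [E|E]; rewrite ?lsum_cons, IH; [lra|]. reflexivity.
Qed.

(* The sum of g over any duplicate-free list containing the support of g is
   the same; this makes [push] independent of the chosen support list. *)
Lemma lsum_indep {X} (l1 l2 : list X) g : NoDup l1 -> NoDup l2 ->
  (forall x, g x <> 0 -> In x l1) -> (forall x, g x <> 0 -> In x l2) ->
  lsum l1 g = lsum l2 g.
Proof.
  intros N1 N2 H1 H2. rewrite (lsum_filter l1), (lsum_filter l2).
  apply lsum_perm, NoDup_Permutation; try apply NoDup_filter; auto.
  intros x. rewrite !filter_In.
  destruct (dec (g x = 0)); split; intros [_ B]; try discriminate; auto.
Qed.

Lemma lsum_exch {X Y} (l : list X) (m : list Y) (k : Y -> X -> R) :
  lsum m (fun y => lsum l (fun x => k y x)) = lsum l (fun x => lsum m (fun y => k y x)).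
Proof.
  induction l as [|a l IH].
  - rewrite lsum_nil. apply lsum_zero. intros; reflexivity.
  - rewrite lsum_cons, <- IH, <- lsum_plus. apply lsum_ext. intros; reflexivity.
Qed.

(** * The induced map f_E on realizations *)

Lemma push_eq {X Y} (f : X -> Y) t l y : NoDup l -> (forall x, t x <> 0 -> In x l) ->
  push f t y = lsum l (fun x => if dec (f x = y) then t x else 0).
Proof.
  intros N H. unfold push.
  assert (S : NoDup (supp_list t) /\ forall x, t x <> 0 -> In x (supp_list t)).
  { unfold supp_list. apply epsilon_spec. exists l; auto. }
  destruct S as [S1 S2]. apply lsum_indep; auto;
  intros x; destruct (dec (f x = y)); intros Hx; try (exfalso; apply Hx; reflexivity); auto.
Qed.

Lemma push_support {X Y} (f : X -> Y) t y :
  push f t y <> 0 -> exists x, t x <> 0 /\ f x = y.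
Proof.
  unfold push. intros H. apply lsum_nonzero in H. destruct H as [x [_ Hx]].
  destruct (dec (f x = y)); [exists x; auto|]. exfalso; apply Hx; reflexivity.
Qed.

Lemma push_nonneg {X Y} (f : X -> Y) t y : (forall x, 0 <= t x) -> 0 <= push f t y.
Proof.
  intros H. unfold push. apply lsum_nonneg. intros x _. destruct (dec (f x = y)); auto; lra.
Qed.

Definition image_list {X Y} (f : X -> Y) (l : list X) : list Y :=
  nodup (fun a b : Y => dec (a = b)) (map f l).

Lemma image_list_In {X Y} (f : X -> Y) l y : In y (image_list f l) <-> exists x, f x = y /\ In x l.
Proof. unfold image_list. rewrite nodup_In, in_map_iff. reflexivity. Qed.

Lemma image_list_simplex {X Y} (f : X -> Y) E l :
  rips_simplex E l -> rips_simplex (img_rel f E) (image_list f l).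
Proof.
  intros [_ Hp]. split; [apply NoDup_nodup|]. intros a b Ha Hb.
  apply image_list_In in Ha as [x [<- Hx]]. apply image_list_In in Hb as [x' [<- Hx']].
  exists x, x'; auto.
Qed.

Lemma push_point {X Y} (f : X -> Y) E t :
  rips_point E t -> rips_point (img_rel f E) (push f t).
Proof.
  intros [Hnn [l [Hl [Hs Hsum]]]]. split; [intros; apply push_nonneg; auto|].
  pose proof (NoDup_nodup (fun a b : Y => dec (a = b)) (map f l)) as Nm.
  exists (image_list f l). split; [|split]; [apply image_list_simplex; auto| |].
  - intros y Hy. apply push_support in Hy as [x [Hx <-]].
    apply image_list_In. exists x; auto.
  - rewrite (lsum_ext _ _ (fun y => lsum l (fun x => if dec (f x = y) then t x else 0)))
      by (intros; apply push_eq; [apply Hl | auto]).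
    rewrite lsum_exch, <- Hsum. apply lsum_ext. intros x Hx.
    rewrite (lsum_delta _ _ (f x)); auto.
    + destruct (dec (f x = f x)); [reflexivity | exfalso; auto].
    + apply image_list_In. exists x; auto.
    + intros y _. destruct (dec (f x = y)); auto. intros H; exfalso; apply H; reflexivity.
Qed.

Lemma push_continuous {X Y} (f : X -> Y) E V : rips_open (img_rel f E) V ->
  rips_open E (fun a => rips_point E a /\ V (push f a)).
Proof.
  intros HV l Hl t Hct [Dt Vt].
  set (m := image_list f l).
  assert (Cm : forall s, in_closed_simplex E l s -> in_closed_simplex (img_rel f E) m (push f s)).
  { intros s [Ds Hs]. split; [apply push_point; auto|]. intros y Hy.
    apply push_support in Hy as [x [Hx <-]]. apply image_list_In. exists x; auto. }
  destruct (HV m (image_list_simplex f E l Hl) (push f t) (Cm t Hct) Vt) as [e [ep He]].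
  set (k := e / (INR (length l) + 1)).
  assert (Hn : 0 <= INR (length l)) by apply pos_INR.
  assert (kp : 0 < k) by (unfold k; apply Rdiv_lt_0_compat; lra).
  assert (ke : k * (INR (length l) + 1) = e) by (unfold k; field; lra).
  exists k. split; auto. intros s Hcs Hcl. split; [apply Hcs|].
  apply He; [apply Cm; auto|]. intros y Hy.
  rewrite (push_eq f s l y), (push_eq f t l y), lsum_minus;
    try apply Hl; try apply Hcs; try apply Hct.
  eapply Rle_lt_trans; [apply (lsum_abs_bound _ _ k)|nra].
  intros x Hx. destruct (dec (f x = y)); [specialize (Hcl x Hx); lra|].
  replace (0 - 0) with 0 by lra. rewrite Rabs_R0. lra.
Qed.

Definition edge {X} (a b : X) (s : R) : X -> R := fun z =>
  (if dec (z = a) then 1 - s else 0) + (if dec (z = b) then s else 0).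

Definition vertex {X} (a : X) : X -> R := edge a a 0.

Definition edge_list {X} (a b : X) : list X := if dec (a = b) then a :: nil else a :: b :: nil.

Lemma edge_list_nodup {X} (a b : X) : NoDup (edge_list a b).
Proof. unfold edge_list; destruct (dec (a = b)); repeat constructor; simpl; intuition. Qed.

Lemma edge_list_in_l {X} (a b : X) : In a (edge_list a b).
Proof. unfold edge_list; destruct (dec (a = b)); simpl; auto. Qed.

Lemma edge_list_in_r {X} (a b : X) : In b (edge_list a b).
Proof. unfold edge_list; destruct (dec (a = b)); simpl; auto. Qed.

Lemma edge_list_in {X} (a b z : X) : In z (edge_list a b) -> z = a \/ z = b.
Proof. unfold edge_list; destruct (dec (a = b)); simpl; intuition. Qed.

Lemma edge_supp {X} (a b : X) s z : edge a b s z <> 0 -> In z (edge_list a b).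
Proof.
  unfold edge. destruct (dec (z = a)); [subst; intros; apply edge_list_in_l|].
  destruct (dec (z = b)); [subst; intros; apply edge_list_in_r|]. intros H; lra.
Qed.

Lemma edge_sum {X} (a b : X) s : lsum (edge_list a b) (edge a b s) = 1.
Proof.
  unfold edge. rewrite lsum_plus.
  rewrite (lsum_delta _ _ a), (lsum_delta _ (fun z => if dec (z = b) then s else 0) b);
    auto using edge_list_nodup, edge_list_in_l, edge_list_in_r.
  - destruct (dec (a = a)); destruct (dec (b = b)); try tauto. lra.
  - intros y _. destruct (dec (y = b)); auto. intros H; lra.
  - intros y _. destruct (dec (y = a)); auto. intros H; lra.
Qed.

Lemma edge_simplex {X} (E : X -> X -> Prop) a b :
  reflexive_rel E -> symmetric_rel E -> E a b -> rips_simplex E (edge_list a b).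
Proof.
  intros R S H. split; [apply edge_list_nodup|]. intros x y Hx Hy.
  apply edge_list_in in Hx; apply edge_list_in in Hy. destruct Hx, Hy; subst; auto.
Qed.

Lemma edge_closed {X} (E : X -> X -> Prop) a b s :
  reflexive_rel E -> symmetric_rel E -> E a b -> 0 <= s <= 1 ->
  in_closed_simplex E (edge_list a b) (edge a b s).
Proof.
  intros R S H Hs. split; [|apply edge_supp]. split.
  - intros z; unfold edge; destruct (dec (z = a)); destruct (dec (z = b)); lra.
  - exists (edge_list a b). split; [apply edge_simplex; auto|].
    split; [apply edge_supp|apply edge_sum].
Qed.

Lemma vertex_point {X} (E : X -> X -> Prop) x :
  reflexive_rel E -> symmetric_rel E -> rips_point E (vertex x).
Proof. intros R S. apply (edge_closed E x x 0 R S (R x)). lra. Qed.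

Lemma vertex_closed {X} (E : X -> X -> Prop) a b :
  reflexive_rel E -> symmetric_rel E -> E a b ->
  in_closed_simplex E (edge_list a b) (vertex a).
Proof.
  intros R S H. split; [apply vertex_point; auto|].
  intros z Hz. apply edge_supp, edge_list_in in Hz.
  destruct Hz; subst; apply edge_list_in_l.
Qed.

Lemma vertex_at {X} (a : X) : vertex a a = 1.
Proof. unfold vertex, edge. destruct (dec (a = a)); [lra | congruence]. Qed.

Lemma push_edge {X Y} (f : X -> Y) a b s : push f (edge a b s) = edge (f a) (f b) s.
Proof.
  apply functional_extensionality. intros y.
  rewrite (push_eq _ _ (edge_list a b)); [|apply edge_list_nodup|apply edge_supp].
  unfold edge at 1.
  rewrite (lsum_ext _ _ (fun z =>
      (if dec (f z = y) then (if dec (z = a) then 1 - s else 0) else 0)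
    + (if dec (f z = y) then (if dec (z = b) then s else 0) else 0))).
  2:{ intros z _. destruct (dec (f z = y)); lra. }
  rewrite lsum_plus.
  rewrite (lsum_delta _ _ a),
    (lsum_delta _ (fun z => if dec (f z = y) then (if dec (z = b) then s else 0) else 0) b);
    auto using edge_list_nodup, edge_list_in_l, edge_list_in_r.
  - unfold edge. destruct (dec (a = a)); [|tauto]. destruct (dec (b = b)); [|tauto].
    destruct (dec (f a = y)), (dec (y = f a)), (dec (f b = y)), (dec (y = f b));
      try congruence; lra.
  - intros z _. destruct (dec (f z = y)); [destruct (dec (z = b))|]; auto; intros H; lra.
  - intros z _. destruct (dec (f z = y)); [destruct (dec (z = a))|]; auto; intros H; lra.
Qed.

Lemma open_contains_edge_start {X} (E : X -> X -> Prop) W a b :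
  reflexive_rel E -> symmetric_rel E -> E a b -> rips_open E W -> W (vertex a) ->
  exists e, 0 < e /\ forall s, 0 <= s <= 1 -> s < e -> W (edge a b s).
Proof.
  intros R S Hab HW Wa.
  destruct (HW (edge_list a b) (edge_simplex E a b R S Hab) (vertex a)
            (vertex_closed E a b R S Hab) Wa) as [e [ep He]].
  exists e. split; auto. intros s Hs Hse. apply He; [apply edge_closed; auto|].
  intros z _. unfold vertex, edge.
  destruct (dec (z = a)), (dec (z = b)); apply Rabs_def1; lra.
Qed.

(** * Open stars *)

Definition open_star {X} (E : X -> X -> Prop) (x : X) (t : X -> R) : Prop :=
  rips_point E t /\ 0 < t x.

Lemma point_open {X} (E : X -> X -> Prop) : rips_open E (rips_point E).
Proof. intros l _ t _ _. exists 1. split; [lra|]. intros s Hs _. apply Hs. Qed.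

Lemma star_restrict_open {X} (E : X -> X -> Prop) W x :
  rips_open E W -> rips_open E (fun t => W t /\ 0 < t x).
Proof.
  intros HW l Hl t Hct [Wt Pt]. destruct (HW l Hl t Hct Wt) as [e [ep He]].
  exists (Rmin e (t x)). split; [apply Rmin_pos; auto|].
  intros s Hcs Hcl. split.
  - apply He; auto. intros z Hz. specialize (Hcl z Hz). pose proof (Rmin_l e (t x)). lra.
  - assert (In x l) by (apply (proj2 Hct); lra).
    specialize (Hcl x H). apply Rabs_def2 in Hcl. pose proof (Rmin_r e (t x)). lra.
Qed.

Lemma point_in_open_star {X} (E : X -> X -> Prop) t :
  rips_point E t -> exists x, open_star E x t.
Proof.
  intros Dt. pose proof Dt as [Hnn [m [_ [_ Hsum]]]].
  destruct (lsum_nonzero m t) as [x [_ Hx]]; [lra|].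
  exists x. split; auto. specialize (Hnn x). lra.
Qed.

Lemma open_star_open {X} (E : X -> X -> Prop) x : rips_open E (open_star E x).
Proof. apply star_restrict_open, point_open. Qed.

Lemma support_related {X} (E : X -> X -> Prop) t x z :
  rips_point E t -> t x <> 0 -> t z <> 0 -> E x z.
Proof. intros [_ [l [[_ Hp] [Hs _]]]] Hx Hz. apply Hp; apply Hs; auto. Qed.

(** * Forward direction: coverings lift chains uniquely *)

Lemma covering_sheet {X Y} (f : X -> Y) E t : rips_covering f E -> rips_point E t ->
  exists W, rips_open E W /\ W t /\ (forall a, W a -> rips_point E a) /\
    (forall a1 a2, W a1 -> W a2 -> push f a1 = push f a2 -> a1 = a2) /\
    (forall O, rips_open E O -> (forall a, O a -> W a) ->
       rips_open (img_rel f E) (fun b => exists a, O a /\ push f a = b)).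
Proof.
  intros [_ [_ [_ Hev]]] Dt.
  destruct (Hev (push f t) (push_point f E t Dt)) as [V [_ [Vt [Sh [Hsh [Hcov [_ Hhom]]]]]]].
  destruct (Hcov t Dt Vt) as [W [ShW Wt]].
  destruct (Hsh W ShW) as [OW WD]. destruct (Hhom W ShW) as [Hinj [_ Hop]].
  exists W. split; [|split; [|split]]; auto. intros a Wa. apply (WD a Wa).
Qed.

(* In a covering, f is injective on every E-ball: compare the points of the
   edges [x,a] and [x,b] close to x, which lie in the sheet through x. *)
Lemma covering_ball_injective {X Y} (f : X -> Y) (E : X -> X -> Prop) :
  reflexive_rel E -> symmetric_rel E -> rips_covering f E ->
  forall x a b, E x a -> E x b -> f a = f b -> a = b.
Proof.
  intros R S Hcov x a b Ha Hb Hf.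
  destruct (covering_sheet f E (vertex x) Hcov (vertex_point E x R S))
    as [W [OW [Wx [_ [Hinj _]]]]].
  destruct (open_contains_edge_start E W x a R S Ha OW Wx) as [e1 [e1p H1]].
  destruct (open_contains_edge_start E W x b R S Hb OW Wx) as [e2 [e2p H2]].
  set (s := Rmin (Rmin e1 e2) 1 / 2).
  pose proof (Rmin_l (Rmin e1 e2) 1). pose proof (Rmin_r (Rmin e1 e2) 1).
  pose proof (Rmin_l e1 e2). pose proof (Rmin_r e1 e2).
  assert (sp : 0 < s) by (unfold s; apply Rdiv_lt_0_compat; [repeat apply Rmin_pos|]; lra).
  assert (Heq : edge x a s = edge x b s).
  { apply Hinj; [apply H1 | apply H2 | rewrite !push_edge, Hf; reflexivity];
      unfold s in *; lra. }
  apply NNPP; intros Hne.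
  pose proof (equal_f Heq a) as Hq. unfold edge in Hq.
  destruct (dec (a = x)), (dec (a = a)), (dec (a = b)); try congruence; lra.
Qed.

(* In a covering, single f(E)-steps lift: the image of the sheet through the
   vertex x0, cut down to its open star, is open and so contains points of
   the edge [f x0, y] near f x0; their preimages have a vertex over y. *)
Lemma covering_step_lift {X Y} (f : X -> Y) (E : X -> X -> Prop) :
  reflexive_rel E -> symmetric_rel E ->
  reflexive_rel (img_rel f E) -> symmetric_rel (img_rel f E) -> rips_covering f E ->
  forall x0 y, img_rel f E (f x0) y -> exists x1, E x0 x1 /\ f x1 = y.
Proof.
  intros R S RY SY Hcov x0 y Hy.
  destruct (dec (y = f x0)) as [Ey|Ny]; [exists x0; auto|].
  destruct (covering_sheet f E (vertex x0) Hcov (vertex_point E x0 R S))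
    as [W [OW [Wx [WD [_ Hop]]]]].
  specialize (Hop (fun t => W t /\ 0 < t x0) (star_restrict_open E W x0 OW) (fun t H => proj1 H)).
  destruct (open_contains_edge_start _ _ (f x0) y RY SY Hy Hop) as [e [ep He]].
  { exists (vertex x0). split; [split; auto; rewrite vertex_at; lra | apply push_edge]. }
  set (s := Rmin e 1 / 2). pose proof (Rmin_l e 1). pose proof (Rmin_r e 1).
  pose proof (Rmin_pos e 1 ep Rlt_0_1).
  destruct (He s) as [t [[Wt Pt] Ht]]; [unfold s; split; lra | unfold s; lra |].
  assert (Hty : push f t y <> 0).
  { rewrite Ht. unfold edge. destruct (dec (y = f x0)); [congruence|].
    destruct (dec (y = y)); [unfold s; lra | congruence]. }
  destruct (push_support f t y Hty) as [w [Hw Hfw]].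
  exists w. split; auto. apply (support_related E t); [apply WD; auto | lra | auto].
Qed.

Lemma chains_lift_of_steps_lift {X Y} (f : X -> Y) (F E : X -> X -> Prop) :
  (forall x0 y, img_rel f F (f x0) y -> exists x1, E x0 x1 /\ f x1 = y) ->
  forall x0 ys, chain_from (img_rel f F) (f x0) ys ->
    exists xs, chain_from E x0 xs /\ map f xs = ys.
Proof.
  intros Hstep x0 ys. revert x0. induction ys as [|y ys IH]; intros x0 [].
  - exists nil. simpl; auto.
  - destruct (Hstep x0 y H) as [x1 [Hx1 <-]].
    destruct (IH x1 H0) as [xs [Hxs Hm]].
    exists (x1 :: xs). simpl. split; [split|]; auto. congruence.
Qed.

Lemma chains_unique_of_ball_injective {X Y} (f : X -> Y) (E : X -> X -> Prop) :
  (forall x a b, E x a -> E x b -> f a = f b -> a = b) ->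
  forall x0 xs1 xs2, chain_from E x0 xs1 -> chain_from E x0 xs2 ->
    map f xs1 = map f xs2 -> xs1 = xs2.
Proof.
  intros Hinj x0 xs1. revert x0. induction xs1 as [|a xs1 IH]; intros x0 xs2 H1 H2 Hm.
  - destruct xs2; [reflexivity | discriminate].
  - destruct xs2 as [|b xs2]; [discriminate|]. simpl in Hm. injection Hm as Hab Hm.
    destruct H1 as [H1a H1r]. destruct H2 as [H2a H2r].
    assert (a = b) by (apply (Hinj x0); auto). subst b.
    f_equal. apply (IH a); auto.
Qed.

Lemma img_rel_reflexive {X Y} (f : X -> Y) E :
  surjective f -> reflexive_rel E -> reflexive_rel (img_rel f E).
Proof. intros Hs R y. destruct (Hs y) as [x <-]. exists x, x; auto. Qed.

Lemma img_rel_symmetric {X Y} (f : X -> Y) E :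
  symmetric_rel E -> symmetric_rel (img_rel f E).
Proof. intros S y1 y2 [a [b [H [<- <-]]]]. exists b, a; auto. Qed.

Lemma covering_chain_properties {X Y} (UX : (X -> X -> Prop) -> Prop)
    (UY : (Y -> Y -> Prop) -> Prop) (f : X -> Y) :
  is_uniformity UX -> uniform_covering_map UX UY f ->
  chain_lifting UX f /\ unique_chain_lifts UX f.
Proof.
  intros [HR [HS _]] [[Hsurj _] Hc].
  split; intros E HE; destruct (Hc E HE) as [E' [HE' [Hsub Hcov]]];
    exists E'; split; auto.
  - apply chains_lift_of_steps_lift. intros x0 y Hy.
    destruct (covering_step_lift f E' (HR _ HE') (HS _ HE')
                (img_rel_reflexive f E' Hsurj (HR _ HE'))
                (img_rel_symmetric f E' (HS _ HE')) Hcov x0 y Hy) as [x1 [Hx1 Hf]].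
    exists x1; auto.
  - apply chains_unique_of_ball_injective, covering_ball_injective; auto.
Qed.

(** * Backward direction: locally lifting entourages give coverings *)

Definition locally_lifting {X Y} (f : X -> Y) (E : X -> X -> Prop) : Prop :=
  reflexive_rel E /\ symmetric_rel E /\
  (forall x y, img_rel f E (f x) y -> exists x', E x x' /\ f x' = y) /\
  (forall x a b c, E x a -> E a b -> E x c -> f b = f c -> b = c).

Section LocallyLifting.

Variables (X Y : Type) (f : X -> Y) (E : X -> X -> Prop).
Hypothesis HE : locally_lifting f E.

Let E_refl : reflexive_rel E := proj1 HE.
Let E_sym : symmetric_rel E := proj1 (proj2 HE).
Let E_step_lift : forall x y, img_rel f E (f x) y -> exists x', E x x' /\ f x' = y :=
  proj1 (proj2 (proj2 HE)).
Let E_inj2 : forall x a b c, E x a -> E a b -> E x c -> f b = f c -> b = c :=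
  proj2 (proj2 (proj2 HE)).

Lemma ball_injective x a b : E x a -> E x b -> f a = f b -> a = b.
Proof. intros Ha Hb H. apply (E_inj2 x x a b); auto. Qed.

Lemma ball_related_of_image x zi zj :
  E x zi -> E x zj -> img_rel f E (f zi) (f zj) -> E zi zj.
Proof.
  intros Hi Hj Hr. destruct (E_step_lift zi (f zj) Hr) as [z [H1 H2]].
  assert (z = zj) by (apply (E_inj2 x zi z zj); auto). subst; auto.
Qed.

Lemma push_on_star t x z : open_star E x t -> E x z -> push f t (f z) = t z.
Proof.
  intros [Dt Pt] Hz. pose proof Dt as [_ [l [[N _] [Hs _]]]].
  rewrite (push_eq _ _ l); auto.
  destruct (classic (In z l)) as [Iz|Nz].
  - rewrite (lsum_delta _ _ z); auto.
    + destruct (dec (f z = f z)); congruence.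
    + intros w _. destruct (dec (f w = f z)); [|intros H; exfalso; apply H; reflexivity].
      intros Hw. apply (ball_injective x); auto. apply (support_related E t); auto; lra.
  - assert (tz : t z = 0) by (apply NNPP; intro; apply Nz, Hs; auto). rewrite tz.
    apply lsum_zero. intros w Hw. destruct (dec (f w = f z)); auto.
    apply NNPP; intros Hw'. assert (w = z); [|subst; auto].
    apply (ball_injective x); auto. apply (support_related E t); auto; lra.
Qed.

Lemma lift_list x m : (forall y, In y m -> img_rel f E (f x) y) ->
  exists l, map f l = m /\ forall z, In z l -> E x z.
Proof.
  induction m as [|y m IH]; intros H.
  - exists nil; simpl; split; auto; tauto.
  - destruct (E_step_lift x y (H y (or_introl eq_refl))) as [x' [Hx' <-]].
    destruct IH as [l [Hl Hz]]; [intros; apply H; right; auto|].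
    exists (x' :: l). simpl. split; [congruence|]. intros z [<-|Hz']; auto.
Qed.

Lemma in_lift x l z : (forall z, In z l -> E x z) -> E x z -> In (f z) (map f l) -> In z l.
Proof.
  intros Hl Hz Hin. apply in_map_iff in Hin. destruct Hin as [z' [Hf Hz']].
  assert (z' = z) by (apply (ball_injective x); auto). subst; auto.
Qed.

Lemma lift_simplex x l : (forall z, In z l -> E x z) ->
  rips_simplex (img_rel f E) (map f l) -> rips_simplex E l.
Proof.
  intros Hl [N Hp]. split; [apply (NoDup_map_inv f); auto|].
  intros a b Ha Hb. apply (ball_related_of_image x); auto. apply Hp; apply in_map; auto.
Qed.

(* The inverse of f_E on the open star of x: lift u to z |-> u (f z) on B(x,E). *)
Definition star_lift (x : X) (u : Y -> R) : X -> R :=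
  fun z => if dec (E x z) then u (f z) else 0.

Lemma star_lift_spec u x : open_star (img_rel f E) (f x) u ->
  open_star E x (star_lift x u) /\ push f (star_lift x u) = u.
Proof.
  intros [Du Pu]. pose proof Du as [Hnn [m [[N Hp] [Hs Hsum]]]].
  assert (Lat : star_lift x u x = u (f x)).
  { unfold star_lift. destruct (dec (E x x)); auto. exfalso; auto. }
  destruct (lift_list x m) as [l [Hl Hz]]; [intros; apply Hp; auto; apply Hs; lra|].
  subst m. assert (Sl : rips_simplex E l) by (apply (lift_simplex x l); auto; split; auto).
  assert (Hsup : forall z, star_lift x u z <> 0 -> In z l).
  { intros z. unfold star_lift. destruct (dec (E x z)) as [Ez|]; [|tauto]. intros Hu.
    apply (in_lift x l); auto. }
  split; [split; [split|] |].
  - intros z; unfold star_lift; destruct (dec (E x z)); auto; lra.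
  - exists l. split; [|split]; auto.
    rewrite <- Hsum, lsum_map. apply lsum_ext. intros z Iz.
    unfold star_lift. destruct (dec (E x z)); auto. exfalso; auto.
  - rewrite Lat; auto.
  - apply functional_extensionality. intros y.
    rewrite (push_eq _ _ l); auto; [|apply Sl].
    destruct (classic (In y (map f l))) as [Iy|Ny].
    + apply in_map_iff in Iy. destruct Iy as [z0 [<- Iz0]].
      rewrite (lsum_delta _ _ z0); auto; [| apply Sl |].
      * destruct (dec (f z0 = f z0)); [|congruence].
        unfold star_lift. destruct (dec (E x z0)); auto. exfalso; auto.
      * intros w Iw. destruct (dec (f w = f z0)); [|intros H; exfalso; apply H; reflexivity].
        intros _. apply (ball_injective x); auto.
    + assert (uy : u y = 0) by (apply NNPP; intro; apply Ny, Hs; auto). rewrite uy.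
      apply lsum_zero. intros w Iw. destruct (dec (f w = y)) as [<-|]; auto.
      exfalso. apply Ny, in_map; auto.
Qed.

Lemma push_open_star x t :
  open_star E x t -> open_star (img_rel f E) (f x) (push f t).
Proof.
  intros St. split; [apply push_point, St|].
  rewrite (push_on_star t x x); auto. apply St.
Qed.

Lemma push_star_injective x t1 t2 : open_star E x t1 -> open_star E x t2 ->
  push f t1 = push f t2 -> t1 = t2.
Proof.
  intros S1 S2 Heq. apply functional_extensionality. intros z.
  destruct (classic (E x z)) as [Ez|Nz].
  - rewrite <- (push_on_star t1 x z), <- (push_on_star t2 x z), Heq; auto.
  - assert (HZ : forall t, open_star E x t -> t z = 0).
    { intros t [Dt Pt]. apply NNPP; intros Hz. apply Nz.
      apply (support_related E t); auto; lra. }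
    rewrite (HZ t1), (HZ t2); auto.
Qed.

Lemma push_star_open x O : rips_open E O -> (forall a, O a -> open_star E x a) ->
  rips_open (img_rel f E) (fun b => exists a, O a /\ push f a = b).
Proof.
  intros HO HOx m Hm u Hcu [t [Ot <-]].
  pose proof (HOx t Ot) as St. destruct St as [Dt Pt].
  assert (Im : In (f x) m) by (apply (proj2 Hcu); rewrite (push_on_star t x x); auto; lra).
  destruct (lift_list x m) as [l [<- Hz]]; [intros; apply (proj2 Hm); auto|].
  assert (Sl : rips_simplex E l) by (apply (lift_simplex x l); auto).
  assert (Ct : in_closed_simplex E l t).
  { split; auto. intros z Hz0. assert (Ez : E x z) by (apply (support_related E t); auto; lra).
    apply (in_lift x l); auto. apply (proj2 Hcu).
    rewrite (push_on_star t x z); [auto | split |]; auto. }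
  destruct (HO l Sl t Ct Ot) as [e [ep He]].
  exists (Rmin e (t x)). split; [apply Rmin_pos; auto|].
  intros u' Hcu' Hcl. pose proof (Rmin_l e (t x)). pose proof (Rmin_r e (t x)).
  assert (Pu' : 0 < u' (f x)).
  { specialize (Hcl (f x) Im). apply Rabs_def2 in Hcl.
    rewrite (push_on_star t x x) in Hcl; [lra | split | ]; auto. }
  destruct (star_lift_spec u' x (conj (proj1 Hcu') Pu')) as [[D1 _] D2].
  exists (star_lift x u'). split; auto. apply He.
  - split; auto. intros z. unfold star_lift. destruct (dec (E x z)) as [Ez|]; [|tauto].
    intros Hz0. apply (in_lift x l); auto. apply (proj2 Hcu'); auto.
  - intros z Iz. assert (Ez := Hz z Iz). unfold star_lift. destruct (dec (E x z)); [|tauto].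
    rewrite <- (push_on_star t x z); [| split |]; auto.
    specialize (Hcl (f z) (in_map f l z Iz)). lra.
Qed.

Lemma stars_disjoint x1 x2 a :
  f x1 = f x2 -> open_star E x1 a -> open_star E x2 a -> x1 = x2.
Proof.
  intros Hf [Da P1] [_ P2]. apply (ball_injective x1); auto.
  apply (support_related E a); auto; lra.
Qed.

Lemma star_preimage a y0 : rips_point E a -> 0 < push f a y0 ->
  exists x, f x = y0 /\ open_star E x a.
Proof.
  intros Da Pa. destruct (push_support f a y0 ltac:(lra)) as [x [Hx Hfx]].
  exists x. split; auto. split; auto. destruct Da as [Hnn _]. specialize (Hnn x). lra.
Qed.

(* f_E is a covering map: the open stars of the vertices over y0 are the
   sheets over the open star of y0. *)
Theorem locally_lifting_covering : surjective f -> rips_covering f E.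
Proof.
  intros Hsurj. split; [|split; [|split]].
  - intros a Da. apply push_point; auto.
  - intros b Db. destruct (point_in_open_star _ b Db) as [y0 Sb].
    destruct (Hsurj y0) as [x <-]. destruct (star_lift_spec b x Sb) as [[D _] P].
    exists (star_lift x b); auto.
  - intros V HV. apply push_continuous; auto.
  - intros b Db. destruct (point_in_open_star _ b Db) as [y0 Sb].
    exists (open_star (img_rel f E) y0). split; [apply open_star_open|]. split; auto.
    exists (fun W => exists x, f x = y0 /\ W = open_star E x).
    split; [|split; [|split]].
    + intros W [x [<- ->]]. split; [apply open_star_open|].
      intros a Sa. split; [apply Sa | apply push_open_star; auto].
    + intros a Da [_ Pa]. destruct (star_preimage a y0 Da Pa) as [x [Hx Sa]].
      exists (open_star E x). split; eauto.
    + intros W1 W2 [x1 [H1 ->]] [x2 [H2 ->]] [a [S1 S2]].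
      assert (x1 = x2) by (apply (stars_disjoint x1 x2 a); congruence). subst; tauto.
    + intros W [x [<- ->]]. split; [|split].
      * apply push_star_injective.
      * intros b' _ Sb'. destruct (star_lift_spec b' x Sb') as [S P].
        exists (star_lift x b'); auto.
      * apply push_star_open.
Qed.

End LocallyLifting.

(** * Locally lifting entourages from the chain properties *)

Lemma step_lifting {X Y} (UX : (X -> X -> Prop) -> Prop) (f : X -> Y) :
  chain_lifting UX f -> forall E, UX E -> exists F, UX F /\
    forall x y, img_rel f F (f x) y -> exists x', E x x' /\ f x' = y.
Proof.
  intros CL E HE. destruct (CL E HE) as [F [HF Hlift]]. exists F. split; auto.
  intros x y Hy. destruct (Hlift x (y :: nil)) as [xs [Hc Hm]]; [simpl; auto|].
  destruct xs as [|x' [|]]; try discriminate. injection Hm as <-.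
  exists x'. split; [apply Hc | reflexivity].
Qed.

Lemma step_uniqueness {X Y} (UX : (X -> X -> Prop) -> Prop) (f : X -> Y) :
  unique_chain_lifts UX f -> forall E, UX E -> exists U, UX U /\
    forall x a b, U x a -> U x b -> f a = f b -> a = b.
Proof.
  intros UCL E HE. destruct (UCL E HE) as [U [HU Uch]]. exists U. split; auto.
  intros x a b Ha Hb Hf.
  assert (a :: nil = b :: nil) by (apply (Uch x); simpl; auto; congruence). congruence.
Qed.

(* With U a ball of
   injectivity inside D, H a half of U and D, and F0 an entourage whose steps
   lift to H-steps, take E = H restricted to pairs whose images are
   f(F0 /\ H)-related: its steps lift through F0, and two E-steps stay in U. *)
Lemma locally_lifting_inside {X Y} (UX : (X -> X -> Prop) -> Prop) (f : X -> Y) :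
  is_uniformity UX -> chain_lifting UX f -> unique_chain_lifts UX f ->
  forall D, UX D -> exists E, UX E /\ (forall x y, E x y -> D x y) /\ locally_lifting f E.
Proof.
  intros [HR [HS [_ [HI [HU HH]]]]] CL UCL D HD.
  destruct (step_uniqueness UX f UCL D HD) as [U [HUU Uinj]].
  destruct (HH _ (HI U D HUU HD)) as [H [HHU Hhalf]].
  destruct (step_lifting UX f CL H HHU) as [F0 [HF0 Flift]].
  set (G := fun x y => F0 x y /\ H x y).
  assert (HG : UX G) by (apply HI; auto).
  set (E := fun x x' => H x x' /\ img_rel f G (f x) (f x')).
  assert (HE : UX E).
  { apply (HU G); auto.
    - intros x y Gxy. split; [apply Gxy|]. exists x, y; auto.
    - intros x. split; [apply HR; auto|]. exists x, x; split; auto. apply (HR G HG).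
    - intros x y [Hxy [a [b [Gab [Ha Hb]]]]]. split; [apply (HS H); auto|].
      exists b, a. split; auto. apply (HS G); auto. }
  exists E. split; [|split]; auto.
  - intros x y [Hxy _]. apply (proj2 (Hhalf x x y (HR H HHU x) Hxy)).
  - split; [apply HR; auto|]. split; [apply HS; auto|]. split.
    + intros x y [a [b [[_ Gab] [Ha Hb]]]].
      destruct (Flift x y) as [x' [Hxx' Hfx']].
      { destruct Gab as [a' [b' [[Fa' _] [Ha' Hb']]]]. exists a', b'.
        repeat split; auto; congruence. }
      exists x'. split; auto. split; auto. rewrite Hfx', <- Ha, <- Hb. auto.
    + intros x a b c [Hxa _] [Hab _] [Hxc _] Hf. apply (Uinj x); auto.
      * apply (proj1 (Hhalf x a b Hxa Hab)).
      * apply (proj1 (Hhalf x x c (HR H HHU x) Hxc)).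
Qed.

Theorem mainTheorem3 (X Y : Type)
  (UX : (X -> X -> Prop) -> Prop) (UY : (Y -> Y -> Prop) -> Prop)
  (HX : is_uniformity UX) (HY : is_uniformity UY) (f : X -> Y)
  (Hgen : generates_uniformity UX UY f) :
  uniform_covering_map UX UY f <-> (chain_lifting UX f /\ unique_chain_lifts UX f).
Proof.
  split.
  - apply covering_chain_properties, HX.
  - intros [CL UCL]. split; auto. intros D HD.
    destruct (locally_lifting_inside UX f HX CL UCL D HD) as [E [HE [HED HLL]]].
    exists E. split; [|split]; auto.
    apply locally_lifting_covering; [apply HLL | apply Hgen].
Qed.
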